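(* Let $L\geq1$ be an integer, $P\geq 0$, $p_B\in[0,1]$, and let $\alpha\sim\mathrm{Binomial}(L,1-p_B)$. Then $$\sup_{r\in\mathbb{R}} r\cdot\mathbb{P}\big(\log(1+\alpha P)\geq r\big)=\max_{i\in\{1,\ldots,L\}}\mathbb{P}(\alpha\geq i)\log(1+iP).$$
   Context: The left-hand side is the outage capacity of a multi-point intermittent block fading channel with $L$ transmitters, each independently blocked with probability $p_B$, and per-transmitter power $P$; $\alpha$ is the number of non-blocked transmitters. $\log$ is the logarithm in a fixed base. *)

From HB Require Import structures.
From mathcomp Require Import all_boot all_order all_algebra.
From mathcomp Require Import all_classical all_reals exp.
Set Implicit Arguments. Unset Strict Implicit. Unset Printing Implicit Defensive.
Import Order.TTheory GRing.Theory Num.Theory.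
Local Open Scope ring_scope.

Definition binom_pmf {R : realType} (L : nat) (q : R) (k : nat) : R :=
  'C(L, k)%:R * q ^+ k * (1 - q) ^+ (L - k).

Definition prob_binom {R : realType} (L : nat) (q : R) (A : pred nat) : R :=
  \sum_(k < L.+1 | A k) binom_pmf L q k.

Definition logb {R : realType} (b x : R) : R := ln x / ln b.

From HB Require Import structures.
From mathcomp Require Import all_boot all_order all_algebra.
From mathcomp Require Import all_classical all_reals exp.
Import Order.TTheory GRing.Theory Num.Theory.
Local Open Scope ring_scope.
Local Open Scope classical_set_scope.

(* Let F be nondecreasing with F 0 = 0, and write T i := P(alpha >= i).  For
   r > 0 the event {F alpha >= r} is the tail {alpha >= i} at the least i with
   r <= F i, so r * P(F alpha >= r) <= F i * T i: the supremum is at most the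
   maximum.  Conversely F i * T i <= F i * P(F alpha >= F i), which is the
   value at r = F i, so every term of the maximum is attained or beaten. *)

Lemma ler_sum_pred (R : numDomainType) (I : Type) (s : seq I) (A B : pred I)
    (w : I -> R) :
  (forall i, 0 <= w i) -> (forall i, A i -> B i) ->
  \sum_(i <- s | A i) w i <= \sum_(i <- s | B i) w i.
Proof.
move=> w_ge0 AB; rewrite [leLHS]big_mkcond [leRHS]big_mkcond /=.
apply: ler_sum => i _; case: ifP => [/AB -> //|_].
by case: ifP.
Qed.

Section LevelSetSupremum.

Variables (R : realType) (n : nat) (w : nat -> R) (F : nat -> R).
Hypothesis w_ge0 : forall k, 0 <= w k.
Hypothesis F_nondecr : {homo F : i j / (i <= j)%N >-> i <= j}.
Hypothesis F0 : F 0 = 0.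

Local Notation mass A := (\sum_(k < n | A k) w k).
Local Notation level r := (fun k : nat => r <= F k).
Local Notation tail i := (fun k : nat => (i <= k)%N).
Local Notation tail_max :=
  (\big[Num.max/0]_(1 <= i < n) (mass (tail i) * F i)).

Lemma F_ge0 k : 0 <= F k.
Proof. by rewrite -F0; apply: F_nondecr. Qed.

Lemma tail_max_ge0 : 0 <= tail_max.
Proof. exact: bigmax_ge_id. Qed.

Lemma level_mass_le_tail_max r : r * mass (level r) <= tail_max.
Proof.
have [r_le0|r_gt0] := leP r 0.
  by apply: le_trans tail_max_ge0; rewrite mulr_le0_ge0 ?sumr_ge0.
have [hit|miss] := boolP [exists k : 'I_n, r <= F k]; last first.
  rewrite big_pred0 ?mulr0 ?tail_max_ge0 // => k.
  by apply/negbTE; move: miss; rewrite negb_exists => /forallP.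
have hit_nat : exists k, (k < n)%N && (r <= F k).
  by case/existsP: hit => k rFk; exists k; rewrite ltn_ord.
case: (ex_minnP hit_nat) => i /andP[i_lt_n rFi] i_min.
have i_gt0 : (0 < i)%N.
  by rewrite lt0n; apply: contraTneq rFi => ->; rewrite F0 -ltNge.
have level_sub_tail : mass (level r) <= mass (tail i).
  by apply: ler_sum_pred => // k rFk; apply: i_min; rewrite ltn_ord.
apply: (@le_trans _ _ (mass (tail i) * F i)).
  by rewrite mulrC ler_pM ?sumr_ge0 ?(ltW r_gt0).
apply: (le_bigmax_seq 0 i xpredT (fun i => mass (tail i) * F i)) => //.
by rewrite mem_index_iota i_gt0.
Qed.

Lemma tail_term_le_level i : mass (tail i) * F i <= F i * mass (level (F i)).
Proof.
rewrite mulrC ler_wpM2l ?F_ge0 //.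
by apply: ler_sum_pred => // k; apply: F_nondecr.
Qed.

Theorem sup_level_mass :
  sup [set r * mass (level r) | r in [set: R]] = tail_max.
Proof.
set S := [set _ | _ in _].
have S_ub : ubound S tail_max by move=> _ [r _ <-]; apply: level_mass_le_tail_max.
have S0 : S 0 by exists 0; rewrite ?mul0r.
have S_le_sup := ub_le_sup (ex_intro _ tail_max S_ub : has_ubound S).
apply/le_anti/andP; split; first by apply: ge_sup S_ub; exists 0.
apply: bigmax_le => [|i _]; first exact: S_le_sup S0.
apply: le_trans (tail_term_le_level i) _.
by apply: S_le_sup; exists (F i).
Qed.

End LevelSetSupremum.

Lemma binom_pmf_ge0 (R : realType) L (q : R) k :
  0 <= q <= 1 -> 0 <= binom_pmf L q k.
Proof.
by case/andP=> q_ge0 q_le1; rewrite /binom_pmf !mulr_ge0 ?exprn_ge0 ?subr_ge0.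
Qed.

Lemma ler_logb (R : realType) (b x y : R) : 1 < b -> 0 < x -> 0 < y ->
  (logb b x <= logb b y) = (x <= y).
Proof.
by move=> b_gt1 x_gt0 y_gt0; rewrite /logb ler_pM2r ?invr_gt0 ?ln_gt0 ?ler_ln.
Qed.

Lemma logb1 (R : realType) (b : R) : logb b 1 = 0.
Proof. by rewrite /logb ln1 mul0r. Qed.

Theorem proposition2 (R : realType) (L : nat) (P pB b : R) :
  (1 <= L)%N -> 0 <= P -> 0 <= pB <= 1 -> 1 < b ->
  sup [set r * prob_binom L (1 - pB) (fun k : nat => r <= logb b (1 + k%:R * P))
      | r in [set: R]]
  = \big[Num.max/0]_(1 <= i < L.+1)
      (prob_binom L (1 - pB) (fun k : nat => (i <= k)%N) * logb b (1 + i%:R * P)).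
Proof.
move=> _ P_ge0 /andP[pB_ge0 pB_le1] b_gt1.
have q01 : 0 <= 1 - pB <= 1 by rewrite subr_ge0 pB_le1 lerBlDr lerDl.
have capacity_gt0 (k : nat) : 0 < 1 + k%:R * P.
  by rewrite ltr_pwDl ?mulr_ge0.
apply: sup_level_mass => [k|i j ij|]; first exact: binom_pmf_ge0.
  by rewrite ler_logb // lerD2l ler_wpM2r ?ler_nat.
by rewrite mul0r addr0 logb1.
Qed.
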